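(* If $(G,u,v)$ is a twice-marked graph of genus $g$ with $k$-general transmission and $k\ge \frac12 g+1$, then $G$ (forgetting the marked points) is Brill–Noether general.
   Context: A graph is a finite, connected, loopless multigraph (parallel edges allowed); its genus is $g=|E(G)|-|V(G)|+1$. A divisor is an element of the free abelian group on $V(G)$. Linear equivalence $\sim$ is generated by chip-firing (firing $w$ subtracts $\mathrm{val}(w)$ chips from $w$ and adds to each other vertex the number of edges joining it to $w$). The rank $r(D)$ is $-1$ if $D$ is not equivalent to an effective divisor, else the largest $r\ge0$ such that $D-E$ is equivalent to an effective divisor for every effective $E$ of degree $r$. $\delta(P)$ is $1$ if $P$ holds and $0$ otherwise. A twice-marked graph $(G,u,v)$ is a graph with two chosen vertices. A twist of $D$ is $D+au+bv$. $\Delta(D)=r(D)-r(D-u)-r(D-v)+r(D-u-v)$. $D$ is submodular if $\Delta(D')\ge0$ for all twists $D'$. If $D$ is submodular, its transmission permutation $\tau^{u,v}_D$ is the unique bijection $\mathbb Z\to\mathbb Z$ with $\delta(\tau^{u,v}_D(b)=a)=\Delta(D+au-bv)$ for all $a,b$. An inversion of a bijection $\tau$ is a pair $(a,b)$ with $a<b$, $\tau(a)>\tau(b)$; two inversions $(a,b),(a',b')$ are $k$-equivalent if $a-a'=b-b'\equiv0\pmod k$; $\mathrm{inv}_k(\tau)$ is the number of classes. A genus-$g$ twice-marked graph has $k$-general transmission if $ku\sim kv$, every divisor is submodular, and $\mathrm{inv}_k(\tau^{u,v}_D)\le g$ for every divisor $D$. A graph $G$ of genus $g$ is Brill–Noether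 general if for every divisor $D$ and every integer $r$ with $0\le r\le r(D)$, $g-(r+1)(g-\deg D+r)\ge0$. *)

From mathcomp Require Import all_boot all_order all_algebra.
From Stdlib Require Import ClassicalEpsilon.
Set Implicit Arguments. Unset Strict Implicit. Unset Printing Implicit Defensive.
Import Order.TTheory GRing.Theory Num.Theory.
Local Open Scope ring_scope.

(* A (loopless, finite, connected) multigraph on the finite vertex type V is
   given by its symmetric edge-multiplicity function m : V -> V -> nat,
   m x y = number of edges joining x and y. *)
Definition is_graph (V : finType) (m : V -> V -> nat) : Prop :=
  [/\ (forall x y, m x y = m y x),
      (forall x, m x x = 0%N) &
      (forall x y, connect (fun a b => (0 < m a b)%N) x y)].

(* number of edges: each edge counted twice in the double sum *)
Definition num_edges (V : finType) (m : V -> V -> nat) : nat :=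
  (\sum_(x : V) \sum_(y : V) m x y)%N./2.

Definition genus (V : finType) (m : V -> V -> nat) : int :=
  (num_edges m)%:Z - (#|V|)%:Z + 1.

Definition divisor (V : finType) := V -> int.

Definition deg (V : finType) (D : divisor V) : int := \sum_(x : V) D x.

Definition effective (V : finType) (D : divisor V) : Prop := forall x, 0 <= D x.

Definition valence (V : finType) (m : V -> V -> nat) (w : V) : nat :=
  (\sum_(x : V) m w x)%N.

Definition fire (V : finType) (m : V -> V -> nat) (w : V) : divisor V :=
  fun x => if x == w then - (valence m w)%:Z else (m x w)%:Z.

(* linear equivalence: equivalence relation generated by chip-firing moves,
   i.e. D' is obtained from D by firing each vertex w an integer number c w
   of times (negative = reverse firing). *)
Definition lin_equiv (V : finType) (m : V -> V -> nat) (D D' : divisor V) : Prop :=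
  exists c : V -> int, forall x, D' x = D x + \sum_(w : V) c w * fire m w x.

Definition add_at (V : finType) (D : divisor V) (a : int) (p : V) : divisor V :=
  fun x => D x + (if x == p then a else 0).

Definition sub_div (V : finType) (D E : divisor V) : divisor V :=
  fun x => D x - E x.

Definition equiv_eff (V : finType) (m : V -> V -> nat) (D : divisor V) : Prop :=
  exists D', lin_equiv m D D' /\ effective D'.

Definition rank_ge (V : finType) (m : V -> V -> nat) (D : divisor V) (r : nat) : Prop :=
  forall E : divisor V, effective E -> deg E = r%:Z -> equiv_eff m (sub_div D E).

Definition pbool (P : Prop) : bool :=
  if excluded_middle_informative P then true else false.

(* rank: -1 if D is not equivalent to an effective divisor; otherwise the
   largest r >= 0 with rank_ge D r.  Such r never exceeds deg D (linear
   equivalence preserves degree), so the max over r <= |deg D| is the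
   largest one overall. *)
Definition rank (V : finType) (m : V -> V -> nat) (D : divisor V) : int :=
  if pbool (equiv_eff m D)
  then (\max_(r < (absz (deg D)).+1 | pbool (rank_ge m D r)) (r : nat))%N%:Z
  else -1.

Definition Delta (V : finType) (m : V -> V -> nat) (u v : V) (D : divisor V) : int :=
  rank m D - rank m (add_at D (-1) u) - rank m (add_at D (-1) v)
  + rank m (add_at (add_at D (-1) u) (-1) v).

Definition twist (V : finType) (u v : V) (D : divisor V) (a b : int) : divisor V :=
  add_at (add_at D a u) b v.

Definition submodular (V : finType) (m : V -> V -> nat) (u v : V) (D : divisor V) : Prop :=
  forall a b : int, 0 <= Delta m u v (twist u v D a b).

Definition is_transmission_perm (V : finType) (m : V -> V -> nat) (u v : V)
    (D : divisor V) (tau : int -> int) : Prop :=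
  bijective tau /\
  forall a b : int, ((tau b == a) : nat)%:Z = Delta m u v (twist u v D a (- b)).

Definition inversion (tau : int -> int) (p : int * int) : Prop :=
  p.1 < p.2 /\ tau p.2 < tau p.1.

Definition k_equiv (k : nat) (p q : int * int) : Prop :=
  p.1 - q.1 = p.2 - q.2 /\ (k%:Z %| (p.1 - q.1))%Z.

(* inv_k(tau) <= n : the inversions of tau fall into at most n
   k-equivalence classes, i.e. there are at most n inversions such that
   every inversion is k-equivalent to one of them. *)
Definition inv_k_le (k : nat) (tau : int -> int) (n : int) : Prop :=
  exists s : seq (int * int),
    (size s)%:Z <= n /\ (forall p, p \in s -> inversion tau p) /\
    forall p, inversion tau p -> exists2 q, q \in s & k_equiv k p q.

Definition k_general_transmission (V : finType) (m : V -> V -> nat) (u v : V)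
    (k : nat) : Prop :=
  [/\ lin_equiv m (add_at (fun _ => 0) k%:Z u) (add_at (fun _ => 0) k%:Z v),
      (forall D : divisor V, submodular m u v D) &
      (forall D : divisor V, exists tau, is_transmission_perm m u v D tau /\
                                          inv_k_le k tau (genus m))].

Definition BN_general (V : finType) (m : V -> V -> nat) : Prop :=
  forall (D : divisor V) (r : int), 0 <= r -> r <= rank m D ->
    0 <= genus m - (r + 1) * (genus m - deg D + r).

From mathcomp Require Import all_boot all_order all_algebra.
From mathcomp Require Import zify ring.
From Stdlib Require Import FunctionalExtensionality ClassicalEpsilon.
Import Order.TTheory GRing.Theory Num.Theory.
Local Open Scope ring_scope.
Set Implicit Arguments. Unset Strict Implicit. Unset Printing Implicit Defensive.

(* Fix a divisor D of degree d and the transmission permutation tau of D,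
   so that f(a, b) = r(D + a u - b v) has mixed differences
   Delta(D + a u - b v) = [tau b = a].  Telescoping these differences
   expresses ranks as counts:  r(D) + 1 = #P with P = {b >= 0 | tau b <= 0},
   and the weak Riemann--Roch bound r(D + A u) <= d + A - g (from the
   acyclic-orientation divisor of degree g - 1, which is not equivalent to
   an effective divisor) forces #Q >= g - d + r(D) for
   Q = {b < 0 | tau b > 0}.  Every pair (q, p) in Q x P is an inversion of
   tau, and tau commutes with the shift by k (as k u ~ k v).  If P lies in
   [0, k) or Q in [-k, 0) these inversions are pairwise k-inequivalent, so
   #P #Q <= inv_k(tau) <= g; otherwise tau has 2k - 1 > g pairwise
   k-inequivalent inversions, which is impossible.  Hence
   (r(D) + 1)(g - d + r(D)) <= g, which bounds every 0 <= r <= r(D). *)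

Lemma Posz_sum (I : Type) (r : seq I) (P : pred I) (F : I -> nat) :
  ((\sum_(i <- r | P i) F i)%N)%:Z = \sum_(i <- r | P i) (F i)%:Z.
Proof. by elim/big_rec2: _ => // i a b _ <-; rewrite PoszD. Qed.

Section Divisors.
Variables (V : finType) (m : V -> V -> nat).
Hypothesis msym : forall x y, m x y = m y x.
Hypothesis mdiag : forall x, m x x = 0%N.

Definition laplacian (c : V -> int) : divisor V :=
  fun x => \sum_(w : V) c w * fire m w x.

Lemma laplacianD c1 c2 x :
  laplacian (fun w => c1 w + c2 w) x = laplacian c1 x + laplacian c2 x.
Proof. by rewrite /laplacian -big_split /=; apply: eq_bigr => w _; rewrite mulrDl. Qed.

Lemma laplacianZ (a : int) c x : laplacian (fun w => a * c w) x = a * laplacian c x.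
Proof. by rewrite /laplacian mulr_sumr; apply: eq_bigr => w _; rewrite mulrA. Qed.

Lemma laplacianN c x : laplacian (fun w => - c w) x = - laplacian c x.
Proof. by rewrite /laplacian -sumrN; apply: eq_bigr => w _; rewrite mulNr. Qed.

Lemma laplacian0 x : laplacian (fun _ => 0) x = 0.
Proof. by rewrite /laplacian big1 // => w _; rewrite mul0r. Qed.

Lemma laplacian_indicator w y : laplacian (fun z => ((z == w) : nat)%:Z) y = fire m w y.
Proof.
rewrite /laplacian (bigD1 w) //= eqxx mul1r big1 ?addr0 // => z /negbTE ->.
by rewrite mul0r.
Qed.

Lemma laplacianE c x : laplacian c x = \sum_(w : V) (m x w)%:Z * (c w - c x).
Proof.
rewrite /laplacian (bigD1 x) //= [RHS](bigD1 x) //= mdiag mul0r add0r /fire eqxx.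
under eq_bigr => w /negbTE wx do rewrite eq_sym wx.
rewrite /valence Posz_sum (bigD1 x) //= mdiag add0r.
rewrite mulrN mulr_sumr -sumrN -big_split; apply: eq_bigr => w wx /=.
ring.
Qed.

Lemma lin_equiv_sym (D D' : divisor V) : lin_equiv m D D' -> lin_equiv m D' D.
Proof.
case=> c Hc; exists (fun w => - c w) => x.
by rewrite -/(laplacian _ x) laplacianN Hc -/(laplacian c x) addrK.
Qed.

Lemma lin_equiv_trans (D1 D2 D3 : divisor V) :
  lin_equiv m D1 D2 -> lin_equiv m D2 D3 -> lin_equiv m D1 D3.
Proof.
case=> c1 H1 [c2 H2]; exists (fun w => c1 w + c2 w) => x.
by rewrite -/(laplacian _ x) laplacianD H2 -/(laplacian c2 x) H1 -/(laplacian c1 x) addrA.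
Qed.

Lemma lin_equiv_shift (D D' X : divisor V) :
  lin_equiv m D D' -> lin_equiv m (fun x => D x + X x) (fun x => D' x + X x).
Proof. by case=> c H; exists c => x; rewrite H; ring. Qed.

Lemma fire_sum0 w : \sum_(x : V) fire m w x = 0.
Proof.
rewrite (bigD1 w) //= /fire eqxx.
rewrite (eq_bigr (fun x => (m w x)%:Z)); last by move=> x /negbTE ->; rewrite msym.
by rewrite /valence (bigD1 w) //= mdiag add0n Posz_sum addrC subrr.
Qed.

Lemma deg_laplacian c : deg (laplacian c) = 0.
Proof.
rewrite /deg /laplacian exchange_big /= big1 // => w _.
by rewrite -mulr_sumr fire_sum0 mulr0.
Qed.

Lemma deg_add (D X : divisor V) : deg (fun x => D x + X x) = deg D + deg X.
Proof. by rewrite /deg big_split. Qed.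

Lemma deg_sub (D E : divisor V) : deg (sub_div D E) = deg D - deg E.
Proof. by rewrite /sub_div /deg sumrB. Qed.

Lemma deg_add_at (D : divisor V) a p : deg (add_at D a p) = deg D + a.
Proof.
rewrite /add_at deg_add; congr (_ + _).
by rewrite /deg (bigD1 p) //= eqxx big1 ?addr0 // => x /negbTE ->.
Qed.

Lemma lin_equiv_deg (D D' : divisor V) : lin_equiv m D D' -> deg D' = deg D.
Proof.
case=> c H; rewrite /deg (eq_bigr (fun x => D x + laplacian c x)); last by move=> x _.
by rewrite big_split /= -/(deg (laplacian c)) deg_laplacian addr0.
Qed.

Lemma deg_effective (D : divisor V) : effective D -> 0 <= deg D.
Proof. by move=> H; rewrite /deg sumr_ge0. Qed.

Lemma deg_equiv_eff (D : divisor V) : equiv_eff m D -> 0 <= deg D.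
Proof. by case=> D' [/lin_equiv_deg <-]; apply: deg_effective. Qed.

Lemma effective_deg0 (E : divisor V) : effective E -> deg E = 0 -> forall x, E x = 0.
Proof.
move=> HE /eqP; rewrite /deg psumr_eq0 // => /allP H x.
by have /implyP /(_ isT) /eqP := H x (mem_index_enum x).
Qed.

Lemma add_at_effective (D : divisor V) a p :
  effective D -> 0 <= a -> effective (add_at D a p).
Proof. by move=> H ha x; rewrite /add_at addr_ge0 //; case: eqP. Qed.

Lemma equiv_eff_lin (D D' : divisor V) :
  lin_equiv m D D' -> equiv_eff m D' -> equiv_eff m D.
Proof. by move=> H [F [H2 HF]]; exists F; split=> //; apply: lin_equiv_trans H H2. Qed.

Lemma equiv_eff_add (D X : divisor V) :
  equiv_eff m D -> effective X -> equiv_eff m (fun x => D x + X x).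
Proof.
case=> F [H HF] HX; exists (fun x => F x + X x); split; first exact: lin_equiv_shift.
by move=> x; rewrite addr_ge0.
Qed.

Lemma rank_ge_lin (D D' : divisor V) r :
  lin_equiv m D D' -> rank_ge m D r -> rank_ge m D' r.
Proof.
move=> H HD E HE dE; apply: (@equiv_eff_lin _ (sub_div D E)); last exact: HD.
exact/(lin_equiv_shift (fun x => - E x))/lin_equiv_sym.
Qed.

Lemma pboolP (P : Prop) : pbool P = true <-> P.
Proof. by rewrite /pbool; case: excluded_middle_informative. Qed.

Lemma pbool_iff (P Q : Prop) : (P <-> Q) -> pbool P = pbool Q.
Proof.
move=> H; rewrite /pbool.
by case: (excluded_middle_informative P) => p; case: (excluded_middle_informative Q) => q //;
  exfalso; tauto.
Qed.

Lemma rank_lin (D D' : divisor V) : lin_equiv m D D' -> rank m D = rank m D'.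
Proof.
move=> H; have H' := lin_equiv_sym H; rewrite /rank (lin_equiv_deg H).
have -> : pbool (equiv_eff m D) = pbool (equiv_eff m D').
  by apply: pbool_iff; split; apply: equiv_eff_lin.
case: (pbool _) => //; congr (_ %:Z); apply: eq_bigl => r.
by apply: pbool_iff; split; apply: rank_ge_lin.
Qed.

Lemma rank_ge0 (D : divisor V) : rank_ge m D 0 <-> equiv_eff m D.
Proof.
have subE (E : divisor V) : (forall x, E x = 0) -> sub_div D E = D.
  by move=> E0; apply: functional_extensionality => x; rewrite /sub_div E0 subr0.
split=> [H | H E HE dE]; last by rewrite subE //; apply: effective_deg0.
by have := H (fun _ => 0); rewrite subE //; apply=> //; rewrite /deg big1.
Qed.

Section RankGe.
Variable x0 : V.

(* rank_ge is downward closed: move one chip of E onto x0 and add it back. *)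
Lemma rank_ge_pred (D : divisor V) s : rank_ge m D s.+1 -> rank_ge m D s.
Proof.
move=> H E HE dE.
have HE' : effective (add_at E 1 x0) := add_at_effective x0 HE ler01.
have dE' : deg (add_at E 1 x0) = s.+1%:Z by rewrite deg_add_at dE -addn1 PoszD.
have := H _ HE' dE' => /equiv_eff_add /(_ (add_at_effective x0 (fun _ => lexx 0) ler01)).
have -> // : (fun x => sub_div D (add_at E 1 x0) x + add_at (fun _ => 0) 1 x0 x)
             = sub_div D E.
by apply: functional_extensionality => x; rewrite /sub_div /add_at; ring.
Qed.

Lemma rank_ge_le (D : divisor V) r s : rank_ge m D r -> (s <= r)%N -> rank_ge m D s.
Proof.
move=> H Hsr; move: H; rewrite -(subnK Hsr); elim: (r - s)%N => [|n IH] H //.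
by apply: IH; apply: rank_ge_pred; rewrite -addSn.
Qed.

Lemma rank_ge_deg (D : divisor V) s : rank_ge m D s -> s%:Z <= deg D.
Proof.
move=> H; have HE : effective (add_at (fun _ => 0) s%:Z x0) by apply: add_at_effective.
have dE : deg (add_at (fun _ => 0) s%:Z x0) = s%:Z.
  by rewrite deg_add_at /deg big1 // add0r.
by have := deg_equiv_eff (H _ HE dE); rewrite deg_sub dE subr_ge0.
Qed.

Lemma rank_geP (D : divisor V) (s : nat) : (s%:Z <= rank m D) <-> rank_ge m D s.
Proof.
rewrite /rank; case: (boolP (pbool (equiv_eff m D))) => [/pboolP He|He]; last first.
  split=> // Hs; exfalso; move/negP: He; apply; apply/pboolP; apply/rank_ge0.
  exact: (rank_ge_le Hs (leq0n s)).
split=> [Hs|Hs]; last first.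
  have sN : (s < (absz (deg D)).+1)%N.
    by rewrite ltnS -lez_nat gez0_abs // (le_trans _ (rank_ge_deg Hs)).
  rewrite lez_nat; apply: (@leq_bigmax_cond _ (fun r : 'I__ => pbool (rank_ge m D r))
    (fun r : 'I__ => nat_of_ord r) (Ordinal sN)); exact/pboolP.
case: (boolP (pbool (rank_ge m D s))) => [/pboolP //|Hn]; exfalso.
have s0 : (0 < s)%N.
  case: s Hs Hn => // Hs Hn; exfalso; move/negP: Hn; apply; apply/pboolP; exact/rank_ge0.
move: Hs; rewrite lez_nat; apply/negP; rewrite -ltnNge.
suff : (\max_(r < (absz (deg D)).+1 | pbool (rank_ge m D r)) r <= s.-1)%N by lia.
apply/bigmax_leqP => r /pboolP Hr; rewrite -ltnS prednK //.
by rewrite ltnNge; apply/negP => Hsr; move/negP: Hn; apply; apply/pboolP; apply: rank_ge_le Hr Hsr.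
Qed.

End RankGe.

Lemma rank_neg (D : divisor V) : deg D < 0 -> rank m D = -1.
Proof.
move=> Hd; rewrite /rank; case: (boolP (pbool _)) => // /pboolP /deg_equiv_eff.
by rewrite leNgt Hd.
Qed.

(* The acyclic orientation given by the enumeration order of V: x has
   [indeg x] edges to earlier vertices.  Its divisor nu(x) = indeg x - 1 is
   the classical divisor of degree g - 1 that is not equivalent to an
   effective divisor. *)
Definition indeg (x : V) : nat := (\sum_(y | (enum_rank y < enum_rank x)%N) m x y)%N.

Definition orientation_divisor : divisor V := fun x => (indeg x)%:Z - 1.

(* Among the vertices fired most often, the earliest one loses at least
   indeg x chips, so it stays negative after any firing script. *)
Lemma orientation_not_equiv_eff (x0 : V) : ~ equiv_eff m orientation_divisor.
Proof.
case=> F [[c Hc] HF].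
case: (@arg_maxP _ _ _ x0 predT c isT) => xm _ Hxm.
case: (@arg_minnP _ xm (fun y => c y == c xm) (fun y => enum_rank y) (eqxx _))
  => x /eqP Hx Hmin.
have := HF x; rewrite Hc -/(laplacian c x) laplacianE /orientation_divisor /indeg.
rewrite [X in _ + X](bigID (fun w => (enum_rank w < enum_rank x)%N)) /=.
set S1 := \sum_(w | (enum_rank w < enum_rank x)%N) (m x w)%:Z * _.
set S2 := \sum_(w | ~~ (enum_rank w < enum_rank x)%N) (m x w)%:Z * _.
have h1 : S1 <= \sum_(w | (enum_rank w < enum_rank x)%N) - (m x w)%:Z.
  apply: ler_sum => w hw; rewrite -[X in _ <= X]mulrN1 ler_wpM2l //.
  have hw1 : c w <= c x by rewrite Hx; apply: Hxm.
  have hw2 : c w != c x.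
    by apply/eqP => e; move: (Hmin w); rewrite e Hx eqxx leqNgt hw => /(_ isT).
  lia.
have h2 : S2 <= 0.
  by apply: sumr_le0 => w _; apply: mulr_ge0_le0 => //; rewrite subr_le0 Hx; apply: Hxm.
rewrite sumrN in h1; rewrite Posz_sum.
by clearbody S1 S2; move: h1 h2; set T := \sum_(i | _) (m x i)%:Z; clearbody T; lia.
Qed.

(* Every edge is counted once as an in-edge of its later endpoint. *)
Lemma sum_indeg : (\sum_(x : V) \sum_(y : V) m x y)%N = (2 * \sum_(x : V) indeg x)%N.
Proof.
have split_row x : (\sum_(y : V) m x y =
    indeg x + \sum_(y | (enum_rank x < enum_rank y)%N) m x y)%N.
  rewrite /indeg [in RHS]big_mkcond [X in (_ + X)%N]big_mkcond -big_split.
  apply: eq_bigr => y _ /=.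
  case: (ltngtP (enum_rank y) (enum_rank x)) => h; rewrite ?addn0 ?add0n //.
  by rewrite (enum_rank_inj (val_inj h)) mdiag.
under eq_bigr => x _ do rewrite split_row.
rewrite big_split /= mul2n -addnn; congr (_ + _)%N.
rewrite /indeg; under eq_bigr => x _ do rewrite big_mkcond /=.
rewrite exchange_big /=; apply: eq_bigr => y _; rewrite [RHS]big_mkcond /=.
by apply: eq_bigr => x _; rewrite msym.
Qed.

Lemma deg_orientation : deg orientation_divisor = genus m - 1.
Proof.
rewrite /deg /orientation_divisor sumrB -Posz_sum /genus /num_edges sum_indeg mul2n.
by rewrite doubleK sumr_const cardT -cardE natz addrK.
Qed.

(* Weak Riemann--Roch: if E - nu is equivalent to an effective divisor F,
   then r(E) < deg F = deg E - g + 1, since otherwise E - F ~ nu would be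
   equivalent to an effective divisor. *)
Lemma rank_le_deg_sub_genus (x0 : V) (E : divisor V) :
  equiv_eff m (sub_div E orientation_divisor) -> rank m E <= deg E - genus m.
Proof.
case=> F [[c Hc] HF].
have dF : deg F = deg E - genus m + 1.
  rewrite (@lin_equiv_deg (sub_div E orientation_divisor) F); last by exists c.
  by rewrite deg_sub deg_orientation; ring.
have F0 := deg_effective HF.
rewrite leNgt; apply/negP => Hr.
have /(rank_geP x0) HE : (absz (deg F))%:Z <= rank m E by rewrite gez0_abs //; lia.
apply: (orientation_not_equiv_eff x0); apply: (equiv_eff_lin _ (HE F HF (esym (gez0_abs F0)))).
exists (fun w => - c w) => x; rewrite -/(laplacian _ x) laplacianN /sub_div Hc.
by rewrite -/(laplacian c x) /sub_div; ring.
Qed.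

Section Connected.
Variable u : V.
Hypothesis conn : forall x y, connect (fun a b => (0 < m a b)%N) x y.

Definition feedable (x : V) : Prop :=
  exists c, (forall y, y != u -> 0 <= laplacian c y) /\ 1 <= laplacian c x.

Lemma feedable_nbr_u z : z != u -> (0 < m z u)%N -> feedable z.
Proof.
move=> zu hm; exists (fun w => ((w == u) : nat)%:Z); split.
  by move=> y /negbTE yu; rewrite laplacian_indicator /fire yu.
by rewrite laplacian_indicator /fire (negbTE zu) lez_nat.
Qed.

(* If x is fed by c, firing x once after valence(x) rounds of c feeds every
   neighbour z of x while keeping x nonnegative. *)
Lemma feedable_nbr x z : feedable x -> z != u -> (0 < m z x)%N -> feedable z.
Proof.
case=> c [H1 H2] zu hm.
have zx : z != x by apply/eqP => e; move: hm; rewrite e mdiag.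
have vx : 0 <= (valence m x)%:Z by [].
exists (fun w => (valence m x)%:Z * c w + ((w == x) : nat)%:Z); split.
  move=> y yu; rewrite laplacianD laplacianZ laplacian_indicator /fire.
  case: (eqVneq y x) => [->|yx]; last by rewrite addr_ge0 // mulr_ge0 // H1.
  have : (valence m x)%:Z <= (valence m x)%:Z * laplacian c x.
    by rewrite -[X in X <= _]mulr1 ler_wpM2l.
  lia.
rewrite laplacianD laplacianZ laplacian_indicator /fire (negbTE zx).
have : 0 <= (valence m x)%:Z * laplacian c z by rewrite mulr_ge0 // H1.
have : 1 <= (m z x)%:Z by rewrite lez_nat.
lia.
Qed.

Lemma feedable_all x : x != u -> feedable x.
Proof.
move=> xu; suff : x == u \/ feedable x by case=> // /eqP e; rewrite e eqxx in xu.
have feed_path w p : w == u \/ feedable w ->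
    path (fun a b => (0 < m a b)%N) w p -> last w p == u \/ feedable (last w p).
  elim: p w => [|a p IH] w Hw //= /andP [hwa Hp]; apply: IH Hp.
  case: (eqVneq a u) => [->|au]; [by left | right].
  case: Hw => [/eqP e|fw]; first by apply: feedable_nbr_u => //; rewrite msym -e.
  by apply: (feedable_nbr fw au); rewrite msym.
have /connectP [p Hp ->] := conn u x.
by apply: feed_path Hp; left.
Qed.

Lemma feed_all : exists c, (forall y, y != u -> 0 <= laplacian c y) /\
                           (forall y, y != u -> 1 <= laplacian c y).
Proof.
suff [c [H1 H2]] : exists c, (forall y, y != u -> 0 <= laplacian c y) /\
    (forall y, y \in enum V -> y != u -> 1 <= laplacian c y).
  by exists c; split=> // y; apply: H2; rewrite mem_enum.
elim: (enum V) => [|a l [c [H1 H2]]].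
  by exists (fun _ => 0); split=> // y _; rewrite laplacian0.
case: (eqVneq a u) => [->|au].
  by exists c; split=> // y; rewrite inE => /orP [/eqP -> /eqP|] //; apply: H2.
have [c' [H1' H2']] := feedable_all au.
exists (fun w => c w + c' w); split=> [y yu|y]; rewrite laplacianD.
  by rewrite addr_ge0 ?H1 ?H1'.
rewrite inE => /orP [/eqP -> _|yl yu]; first by have := H1 a au; lia.
by have := H2 y yl yu; have := H1' y yu; lia.
Qed.

Lemma equiv_eff_add_at (Y : divisor V) : exists A : nat, equiv_eff m (add_at Y A%:Z u).
Proof.
have [c [_ Hc]] := feed_all.
set N := \sum_(x : V) `|Y x|.
have HN x : - Y x <= N.
  rewrite /N (bigD1 x) //= -normrN; apply: le_trans (ler_norm _) _.
  by rewrite normrN lerDl sumr_ge0.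
have N0 : 0 <= N by rewrite sumr_ge0.
set c' := fun w => N * c w.
exists (absz (Y u + laplacian c' u)).
exists (fun x => add_at Y (absz (Y u + laplacian c' u))%:Z u x + laplacian c' x).
split; first by exists c'.
move=> x; rewrite /add_at; case: (eqVneq x u) => [->|xu].
  by have := lez_abs (Y u + laplacian c' u); lia.
rewrite /c' laplacianZ.
have : N <= N * laplacian c x by rewrite -[X in X <= _]mulr1 ler_wpM2l // Hc.
by have := HN x; lia.
Qed.

Lemma rank_add_at_bound (D : divisor V) :
  exists A : nat, rank m (add_at D A%:Z u) <= deg D + A%:Z - genus m.
Proof.
have [A HA] := equiv_eff_add_at (sub_div D orientation_divisor).
exists A; rewrite -(deg_add_at D _ u); apply: (rank_le_deg_sub_genus u).
suff -> : sub_div (add_at D A u) orientation_divisor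
          = add_at (sub_div D orientation_divisor) A u by [].
by apply: functional_extensionality => x; rewrite /add_at /sub_div; ring.
Qed.

End Connected.
End Divisors.

Definition irange (B : int) (n : nat) : seq int := [seq B + i%:Z | i <- iota 0 n].

Lemma irangeS B n : irange B n.+1 = rcons (irange B n) (B + n%:Z).
Proof. by rewrite /irange -addn1 iotaD map_cat cats1 add0n. Qed.

Lemma irangeD B n1 n2 : irange B (n1 + n2) = irange B n1 ++ irange (B + n1%:Z) n2.
Proof.
rewrite /irange iotaD map_cat add0n; congr (_ ++ _).
rewrite -[n1 in iota n1 n2]addn0 iotaDl -map_comp.
by apply: eq_map => i /=; rewrite PoszD; ring.
Qed.

Lemma mem_irange x B n : (x \in irange B n) = (B <= x) && (x < B + n%:Z).
Proof.
apply/mapP/andP => [[i]|[h1 h2]].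
  by rewrite mem_iota add0n => /andP [_ hi] ->; rewrite lerDl ltrD2l ltz_nat.
exists (absz (x - B)); last by rewrite gez0_abs ?subr_ge0 //; ring.
by rewrite mem_iota add0n leq0n /= -ltz_nat gez0_abs ?subr_ge0 //; lia.
Qed.

Lemma irange_uniq B n : uniq (irange B n).
Proof. by rewrite /irange map_inj_uniq ?iota_uniq // => i j /addrI []. Qed.

(* A bijection tau with b - d <= tau b <= b + M maps exactly A integers of
   [-M, n) into (0, A] when d + A < n: every preimage of (0, A] lies there. *)
Lemma count_preimage_interval (tau : int -> int) (A M n : nat) (d : int) :
  bijective tau -> (forall b, b - d <= tau b) -> (forall b, tau b <= b + M%:Z) ->
  d + A%:Z < n%:Z ->
  count (fun b => (0 < tau b) && (tau b <= A%:Z)) (irange (- M%:Z) (M + n)) = A.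
Proof.
move=> [ti tiK tauK] lb ub hn; rewrite -size_filter.
set L := filter _ _.
have uL : uniq (map tau L).
  by rewrite map_inj_uniq ?filter_uniq ?irange_uniq //; apply: can_inj tiK.
suff /perm_size : perm_eq (map tau L) (irange 1 A).
  by rewrite size_map /irange size_map size_iota.
apply: uniq_perm => //; first exact: irange_uniq.
move=> w; rewrite mem_irange; apply/mapP/andP => [[b]|[h1 h2]].
  by rewrite mem_filter => /andP [/andP [h1 h2] _] ->; split => //; lia.
exists (ti w); last by rewrite tauK.
rewrite mem_filter tauK mem_irange; apply/andP; split; first by apply/andP; split; lia.
by have := lb (ti w); have := ub (ti w); rewrite tauK PoszD; lia.
Qed.

Section Transmission.
Variables (V : finType) (m : V -> V -> nat).
Hypothesis msym : forall x y, m x y = m y x.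
Hypothesis mdiag : forall x, m x x = 0%N.
Variables (u v : V) (D : divisor V) (tau : int -> int).
Hypothesis Htau : forall a b : int,
  ((tau b == a) : nat)%:Z = Delta m u v (twist u v D a (- b)).

(* The rank function f(a, b) = r(D + a u - b v) whose mixed second
   differences are the entries of the permutation matrix of tau. *)
Definition twist_rank (a b : int) : int := rank m (twist u v D a (- b)).

Lemma Delta_twist_rank a b : Delta m u v (twist u v D a (- b)) =
  twist_rank a b - twist_rank (a - 1) b - twist_rank a (b + 1)
  + twist_rank (a - 1) (b + 1).
Proof.
have twist_u : add_at (twist u v D a (- b)) (-1) u = twist u v D (a - 1) (- b).
  apply: functional_extensionality => x; rewrite /twist /add_at.
  by case: (x == u); case: (x == v); ring.
have twist_v a' : add_at (twist u v D a' (- b)) (-1) v = twist u v D a' (- (b + 1)).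
  apply: functional_extensionality => x; rewrite /twist /add_at.
  by case: (x == u); case: (x == v); ring.
by rewrite /Delta /twist_rank twist_u !twist_v.
Qed.

Lemma twist_rank_neg a b : deg D + a - b < 0 -> twist_rank a b = -1.
Proof. by move=> h; rewrite /twist_rank rank_neg // /twist !deg_add_at. Qed.

(* Left of the line a = b - deg D all ranks are -1, so Delta vanishes. *)
Lemma transmission_lb b : b - deg D <= tau b.
Proof.
rewrite leNgt; apply/negP => h.
by have := Htau (tau b) b; rewrite eqxx Delta_twist_rank !twist_rank_neg; lia.
Qed.

(* Summing Delta over a column: f(A, b) - f(A, b+1) = [tau b <= A]. *)
Lemma twist_rank_step A b :
  twist_rank A b - twist_rank A (b + 1) = ((tau b <= A)%R : nat)%:Z.
Proof.
have indS (x a : int) : ((x <= a)%R : nat)%:Z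
    = ((x == a) : nat)%:Z + ((x <= a - 1)%R : nat)%:Z.
  by case: (ltgtP x a) => h; rewrite /= ?h; case: (boolP (x <= a - 1)) => h' //=; lia.
have hlb := transmission_lb b.
case: (leP A (b - deg D - 1)) => hA; first by rewrite !twist_rank_neg; lia.
have -> : A = (b - deg D - 1) + (absz (A - (b - deg D - 1))%R)%:Z by rewrite gez0_abs; lia.
elim: (absz _) => [|n IH]; first by rewrite addr0 !twist_rank_neg; lia.
have := Htau (b - deg D - 1 + n.+1%:Z) b; rewrite Delta_twist_rank indS.
have -> : b - deg D - 1 + n.+1%:Z - 1 = b - deg D - 1 + n%:Z by rewrite -addn1 PoszD; ring.
by rewrite -IH => ->; ring.
Qed.

Lemma twist_rank_telescope A B n : twist_rank A B
  = (count (fun b => tau b <= A) (irange B n))%:Z + twist_rank A (B + n%:Z).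
Proof.
elim: n => [|n IH]; first by rewrite addr0 add0r.
rewrite IH irangeS -cats1 count_cat /= addn0 PoszD -addrA; congr (_ + _).
rewrite -twist_rank_step -addn1 PoszD addrA.
by case: (tau (B + n%:Z) <= A); ring.
Qed.

Lemma twist_rank_count A B n : deg D + A - B - n%:Z < 0 ->
  twist_rank A B + 1 = (count (fun b => tau b <= A) (irange B n))%:Z.
Proof. by move=> h; rewrite (twist_rank_telescope A B n) twist_rank_neg; [ring | lia]. Qed.

(* k u ~ k v makes f, and hence tau, invariant under the shift by (k, k). *)
Lemma transmission_periodic (k : nat) :
  lin_equiv m (add_at (fun _ => 0) k%:Z u) (add_at (fun _ => 0) k%:Z v) ->
  forall b, tau (b + k%:Z) = tau b + k%:Z.
Proof.
case=> c Hc.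
have fper a b : twist_rank (a + k%:Z) (b + k%:Z) = twist_rank a b.
  rewrite /twist_rank; symmetry; apply: rank_lin => //.
  exists (fun w => - c w) => x; rewrite -/(laplacian m _ x) laplacianN.
  have := Hc x; rewrite -/(laplacian m c x) /twist /add_at.
  by case: (x == u); case: (x == v) => /= h; lia.
move=> b; apply/eqP.
have := Htau (tau b + k%:Z) (b + k%:Z); rewrite Delta_twist_rank.
rewrite (_ : tau b + k%:Z - 1 = tau b - 1 + k%:Z); last by ring.
rewrite (_ : b + k%:Z + 1 = b + 1 + k%:Z); last by ring.
rewrite !fper -Delta_twist_rank -Htau eqxx.
by case: (tau (b + k%:Z) == tau b + k%:Z).
Qed.
Lemma twist_rank_A0 (A : int) : twist_rank A 0 = rank m (add_at D A u).
Proof.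
rewrite /twist_rank /twist oppr0; congr (rank m _); apply: functional_extensionality => x.
by rewrite /add_at; case: (x == v); ring.
Qed.

Lemma count_nonpos_image n : deg D < n%:Z ->
  (count (fun b => tau b <= 0) (irange 0 n))%:Z = rank m D + 1.
Proof.
move=> hn; rewrite -twist_rank_count; last by lia.
rewrite twist_rank_A0; congr (rank m _ + 1); apply: functional_extensionality => x.
by rewrite /add_at; case: (x == u); ring.
Qed.

(* For a connected graph: tau takes exactly A values in (0, A] on [-M, n)
   but, by the Riemann--Roch bound r(D + A u) <= deg D + A - g, at most
   deg D + A - g - r(D) of them on [0, n); so at least g - deg D + r(D)
   integers b < 0 have tau b > 0. *)
Lemma count_pos_image_neg (M : nat) :
  (forall x y, connect (fun a b => (0 < m a b)%N) x y) ->
  bijective tau -> (forall b, tau b <= b + M%:Z) ->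
  genus m - deg D + rank m D <= (count (fun b => 0 < tau b) (irange (- M%:Z) M))%:Z.
Proof.
move=> conn Hbij ub.
have [A hA] := rank_add_at_bound msym mdiag u conn D.
set n := (absz (deg D + A%:Z)).+1.
have hn : deg D + A%:Z < n%:Z.
  by rewrite /n -addn1 PoszD; have := lez_abs (deg D + A%:Z); lia.
have := count_preimage_interval Hbij transmission_lb ub hn.
rewrite irangeD count_cat (_ : - M%:Z + M%:Z = 0) ?addNr // => total.
have := @twist_rank_count A%:Z 0 n; rewrite twist_rank_A0 => /(_ ltac:(lia)) c_le_A.
have := @count_nonpos_image n ltac:(lia) => c_nonpos.
have split_le_A (s : seq int) :
    (count (fun b => (0 < tau b)%R && (tau b <= A%:Z)%R) s
    + count (fun b => (tau b <= 0)%R) s = count (fun b => (tau b <= A%:Z)%R) s)%N.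
  elim: s => [|b s IH] //=; rewrite -IH.
  by case: (ltP 0 (tau b)) => h1 /=; case: (boolP (tau b <= A%:Z)) => h2 /=; lia.
have := split_le_A (irange 0 n).
have : (count (fun b => (0 < tau b)%R && (tau b <= A%:Z)%R) (irange (- M%:Z) M)
        <= count (fun b => (0 < tau b)%R) (irange (- M%:Z) M))%N.
  by apply: sub_count => b /andP [].
move: total c_le_A c_nonpos hA.
set c1 := count _ (irange (- M%:Z) M); set c2 := count _ (irange (- M%:Z) M).
set c3 := count _ (irange 0 n); set c4 := count _ (irange 0 n).
set c5 := count _ (irange 0 n).
lia.
Qed.

End Transmission.

Definition k_equivb (k : nat) (p q : int * int) : bool :=
  (p.1 - q.1 == p.2 - q.2) && (k%:Z %| p.1 - q.1)%Z.

Lemma k_equivP k p q : k_equiv k p q <-> k_equivb k p q.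
Proof. by rewrite /k_equiv /k_equivb; split=> [[/eqP -> ->]|/andP [/eqP -> ->]]. Qed.

Lemma k_equivb_refl k p : k_equivb k p p.
Proof. by rewrite /k_equivb !subrr eqxx dvdz0. Qed.

Lemma k_equivb_sym k p q : k_equivb k p q -> k_equivb k q p.
Proof.
case/andP => /eqP e h; apply/andP; split; first by apply/eqP; rewrite -opprB e opprB.
by rewrite -opprB rpredN.
Qed.

Lemma k_equivb_trans k p q r : k_equivb k p q -> k_equivb k q r -> k_equivb k p r.
Proof.
case/andP => /eqP e1 h1 /andP [/eqP e2 h2]; rewrite /k_equivb.
have -> : p.1 - r.1 = (p.1 - q.1) + (q.1 - r.1) by ring.
rewrite rpredD // e1 e2 andbT; apply/eqP; ring.
Qed.

Lemma count_k_equivb_le1 k q0 (s : seq (int * int)) : uniq s ->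
  {in s &, forall p q, k_equivb k p q -> p = q} ->
  (count (fun p => k_equivb k p q0) s <= 1)%N.
Proof.
elim: s => [|p s IH] //= /andP [ps us] H.
have H' : {in s &, forall p q, k_equivb k p q -> p = q}.
  by move=> a b ha hb; apply: H; rewrite inE ?ha ?hb orbT.
case: (boolP (k_equivb k p q0)) => hp /=; last by rewrite add0n IH.
rewrite (@eq_in_count _ _ pred0) ?count_pred0 // => a ha /=.
apply/negbTE/negP => hk.
have e : p = a.
  by apply: H; rewrite ?inE ?eqxx ?ha ?orbT //; apply: k_equivb_trans hp (k_equivb_sym hk).
by move: ps; rewrite e ha.
Qed.

Lemma size_le_cover k (t s : seq (int * int)) : uniq s ->
  {in s &, forall p q, k_equivb k p q -> p = q} ->
  (forall p, p \in s -> exists2 q, q \in t & k_equivb k p q) -> (size s <= size t)%N.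
Proof.
elim: t s => [|q0 t IH] s us Hs Hc.
  by case: s us Hs Hc => [//|p s] _ _ /(_ p (mem_head _ _)) [q].
rewrite -(count_predC (fun p => k_equivb k p q0)) -[count (predC _) _]size_filter.
have := count_k_equivb_le1 q0 us Hs.
suff : (size (filter (predC (fun p => k_equivb k p q0)) s) <= size t)%N by rewrite /=; lia.
apply: IH; first by rewrite filter_uniq.
  by move=> a b; rewrite !mem_filter => /andP [_ ha] /andP [_ hb]; apply: Hs.
move=> p; rewrite mem_filter => /andP [hp ps]; have [q] := Hc p ps.
by rewrite inE => /orP [/eqP ->|qt] hq; [rewrite /= hq in hp | exists q].
Qed.

Lemma dvdz_small (k : nat) (z : int) :
  (k%:Z %| z)%Z -> - k%:Z < z -> z < k%:Z -> z = 0.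
Proof.
case/dvdzP => q -> h1 h2; case: (ltgtP q 0) => hq; last by rewrite hq mul0r.
  have : q * k%:Z <= - k%:Z by rewrite -mulN1r ler_wpM2r //; lia.
  lia.
have : k%:Z <= q * k%:Z by rewrite -[X in X <= _]mul1r ler_wpM2r //; lia.
lia.
Qed.

Definition window_values (k : nat) (t : int) : seq int :=
  [seq t + i%:Z | i <- [seq i <- iota 1 (2 * k).-1 | i != k]].

Lemma size_window_values k t : (0 < k)%N -> size (window_values k t) = (2 * k - 2)%N.
Proof.
move=> kpos; rewrite size_map size_filter.
have := count_predC (pred1 k) (iota 1 (2 * k).-1).
rewrite size_iota (count_uniq_mem _ (iota_uniq _ _)) mem_iota.
have -> : (1 <= k < 1 + (2 * k).-1)%N by apply/andP; split; lia.
by rewrite (eq_count (a2 := predC (pred1 k))) //=; lia.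
Qed.

Lemma window_values_uniq k t : uniq (window_values k t).
Proof. by rewrite map_inj_uniq ?filter_uniq ?iota_uniq // => i j /addrI []. Qed.

Lemma mem_window_values k t w : w \in window_values k t ->
  [/\ t < w, w < t + 2 * k%:Z & ~~ (k%:Z %| w - t)%Z].
Proof.
case/mapP => i; rewrite mem_filter mem_iota => /andP [ik /andP [h1 h2]] ->.
have i2k : i%:Z < 2 * k%:Z by rewrite -PoszM ltz_nat; lia.
rewrite addrC addrK ltrDr ltz_nat h1 [_ + t]addrC ltrD2l; split => //.
apply/negP => dvd_i.
have ik0 : i%:Z - k%:Z = 0.
  by apply: (dvdz_small (k := k)); [exact: rpredB dvd_i (dvdzz _) | lia | lia].
have ek : i = k by lia.
by rewrite ek eqxx in ik.
Qed.

Section KInversions.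
Variables (tau : int -> int) (k : nat) (g : int).
Hypothesis kpos : (0 < k)%N.
Hypothesis Hper : forall b, tau (b + k%:Z) = tau b + k%:Z.
Hypothesis Hinv : inv_k_le k tau g.

Lemma periodic_shift b j : tau (b + j * k%:Z) = tau b + j * k%:Z.
Proof.
have shift_nat b' (n : nat) : tau (b' + n%:Z * k%:Z) = tau b' + n%:Z * k%:Z.
  elim: n b' => [|n IH] b'; first by rewrite !mul0r !addr0.
  rewrite -addn1 PoszD mulrDl mul1r !addrA Hper IH; ring.
case: (leP 0 j) => hj; first by rewrite -(gez0_abs hj) shift_nat.
have := shift_nat (b + j * k%:Z) (absz j).
by rewrite ltz0_abs // mulNr addrK => ->; ring.
Qed.

(* tau b - b is k-periodic, hence bounded above. *)
Lemma periodic_bounded : exists M : nat, forall b, tau b <= b + M%:Z.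
Proof.
have [M HM] : exists M : nat, forall i : nat, (i < k)%N -> tau i%:Z - i%:Z <= M%:Z.
  elim: k => [|n [M HM]]; first by exists 0%N.
  exists (maxn M (absz (tau n%:Z - n%:Z))) => i; rewrite ltnS leq_eqVlt.
  by case/orP => [/eqP ->|/HM hi]; have := lez_abs (tau n%:Z - n%:Z); lia.
exists M => b.
have k0 : k%:Z != 0 by rewrite eqz_nat -lt0n.
have hr := modz_ge0 b k0.
have hr2 : (b %% k%:Z)%Z < k%:Z by apply: ltz_pmod; rewrite ltz_nat.
rewrite {1 2}(divz_eq b k%:Z) addrC periodic_shift.
have := HM (absz (b %% k%:Z)%Z); rewrite gez0_abs // -ltz_nat gez0_abs // => /(_ hr2).
lia.
Qed.

Lemma inequivalent_inversions_le (s : seq (int * int)) : uniq s ->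
  (forall p, p \in s -> inversion tau p) ->
  {in s &, forall p q, k_equivb k p q -> p = q} -> (size s)%:Z <= g.
Proof.
move=> us Hs Hq; case: Hinv => t [ht [_ Hc]].
apply: le_trans ht; rewrite lez_nat; apply: (size_le_cover us Hq) => p ps.
by have [q qt /k_equivP hq] := Hc p (Hs p ps); exists q.
Qed.

Lemma inversion_rectangle (P Q : seq int) : uniq P -> uniq Q ->
  (forall p, p \in P -> 0 <= p /\ tau p <= 0) ->
  (forall q, q \in Q -> q < 0 /\ 0 < tau q) ->
  (forall p, p \in P -> p < k%:Z) \/ (forall q, q \in Q -> - k%:Z <= q) ->
  ((size P * size Q)%N)%:Z <= g.
Proof.
move=> uP uQ HP HQ Hc.
have := @inequivalent_inversions_le [seq (q, p) | q <- Q, p <- P].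
rewrite size_allpairs mulnC; apply.
- by apply: allpairs_uniq => // [[a b] [c d]] _ _ /= [-> ->].
- move=> z /allpairsP [[q p] [hq hp ->]] /=.
  by have := HP p hp; have := HQ q hq; rewrite /inversion /=; lia.
- move=> z1 z2 /allpairsP [[q p] [hq hp ->]] /allpairsP [[q' p'] [hq' hp' ->]] /=.
  case/andP => /= /eqP e hd.
  have := HP p hp; have := HP p' hp'; have := HQ q hq; have := HQ q' hq' => h1 h2 h3 h4.
  case: Hc => Hc.
  + have := Hc p hp; have := Hc p' hp' => h5 h6.
    have z0 : p - p' = 0 by apply: (dvdz_small (k := k)); rewrite -?e //; lia.
    by congr (_, _); lia.
  + have := Hc q hq; have := Hc q' hq' => h5 h6.
    have z0 : q - q' = 0 by apply: (dvdz_small (k := k)) => //; lia.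
    by congr (_, _); lia.
Qed.

Section Window.
Variables (ti : int -> int) (x y : int).
Hypotheses (tauK : cancel ti tau) (xy : x < y).

(* For tau y < w < tau x, the preimage of w forms an inversion with x or
   with y, depending on which side of y it falls. *)
Definition window_pair (w : int) : int * int := if ti w < y then (ti w, y) else (x, ti w).

Lemma window_pair_inversion w : tau y < w -> w < tau x -> inversion tau (window_pair w).
Proof.
move=> s1 s2; rewrite /window_pair /inversion.
case: (boolP (ti w < y)) => h1 /=; rewrite tauK; split => //.
have : ti w != y by apply/eqP => e; move: s1; rewrite -e tauK ltxx.
lia.
Qed.

Lemma window_pair_xy w : tau y < w -> w < tau x -> ~~ k_equivb k (x, y) (window_pair w).
Proof.
move=> s1 s2; rewrite /window_pair.
case: (boolP (ti w < y)) => h1; apply/negP => /andP [/eqP /= e _].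
- have ex : x = ti w by lia.
  by move: s2; rewrite ex tauK ltxx.
- have ey : y = ti w by lia.
  by move: s1; rewrite ey tauK ltxx.
Qed.

(* Pairs from the two sides can be k-equivalent only if w' = tau y mod k:
   the equivalence forces ti w' = y - j k, and tau commutes with k-shifts. *)
Lemma window_pair_cross w w' :
  k_equivb k (ti w, y) (x, ti w') -> (k%:Z %| w' - tau y)%Z.
Proof.
case/andP => /eqP /= e /dvdzP [j hj].
have : ti w' = y + (- j) * k%:Z by rewrite mulNr -hj e; ring.
move/(congr1 tau); rewrite tauK periodic_shift => ->.
by rewrite addrC addKr dvdz_mull.
Qed.

Lemma window_pair_inj w w' :
  ~~ (k%:Z %| w - tau y)%Z -> ~~ (k%:Z %| w' - tau y)%Z ->
  k_equivb k (window_pair w) (window_pair w') -> w = w'.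
Proof.
move=> nw nw'; rewrite /window_pair.
case: (boolP (ti w < y)) => h1; case: (boolP (ti w' < y)) => h2.
- by case/andP => /eqP /= e _; rewrite -(tauK w) -(tauK w'); congr tau; lia.
- by move/window_pair_cross; rewrite (negbTE nw').
- by move/k_equivb_sym/window_pair_cross; rewrite (negbTE nw).
- by case/andP => /eqP /= e _; rewrite -(tauK w) -(tauK w'); congr tau; lia.
Qed.
End Window.

(* If tau p <= 0 for some p >= k and tau q > 0 for some q < -k, then
   x = q + k < y = p - k with tau x > k and tau y <= -k; the pair (x, y)
   and the window pairs of the window values of tau y are pairwise
   k-inequivalent inversions, so 2k - 1 <= g. *)
Lemma wide_inversions p q : bijective tau ->
  tau p <= 0 -> k%:Z <= p -> 0 < tau q -> q < - k%:Z -> 2 * k%:Z - 1 <= g.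
Proof.
case=> ti _ tauK hp1 hp2 hq1 hq2.
set x := q + k%:Z; set y := p - k%:Z.
have hx : tau x = tau q + k%:Z by rewrite /x Hper.
have hy : tau y = tau p - k%:Z by rewrite -[in RHS](subrK k%:Z p) Hper; ring.
have xy : x < y by rewrite /x /y; lia.
set W := window_values k (tau y).
have memW w : w \in W -> [/\ tau y < w, w < tau x & ~~ (k%:Z %| w - tau y)%Z].
  by case/mem_window_values => s1 s2 nw; split => //; lia.
have := @inequivalent_inversions_le ((x, y) :: [seq window_pair ti x y w | w <- W]).
rewrite /= size_map size_window_values // => bound.
suff : ((2 * k - 2).+1 : nat)%:Z <= g by have : (1 <= k)%N by []; lia.
apply: bound.
- rewrite map_inj_in_uniq; last first.
    move=> w w' /memW [_ _ nw] /memW [_ _ nw'] e.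
    by apply: (window_pair_inj tauK xy nw nw'); rewrite e k_equivb_refl.
  rewrite window_values_uniq andbT; apply/negP => /mapP [w /memW [s1 s2 _] e].
  by have := window_pair_xy tauK xy s1 s2; rewrite -e k_equivb_refl.
- move=> z; rewrite inE => /orP [/eqP ->|/mapP [w /memW [s1 s2 _] ->]].
    by rewrite /inversion /= hx hy; split => //; lia.
  by apply: (window_pair_inversion tauK xy).
- move=> z1 z2; rewrite !inE.
  case/orP => [/eqP ->|/mapP [w /memW [s1 s2 nw] ->]];
    case/orP => [/eqP ->|/mapP [w' /memW [s1' s2' nw'] ->]] //.
  + by move=> hk; have := window_pair_xy tauK xy s1' s2'; rewrite hk.
  + by move/k_equivb_sym => hk; have := window_pair_xy tauK xy s1 s2; rewrite hk.
  + by move/(window_pair_inj tauK xy nw nw') ->.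
Qed.

(* When 2k >= g + 2 the wide configuration cannot occur, so the rectangle
   bound |P| |Q| <= g always applies. *)
Lemma rectangle_bound (P Q : seq int) : bijective tau -> g + 2 <= 2 * k%:Z ->
  uniq P -> uniq Q ->
  (forall p, p \in P -> 0 <= p /\ tau p <= 0) ->
  (forall q, q \in Q -> q < 0 /\ 0 < tau q) ->
  ((size P * size Q)%N)%:Z <= g.
Proof.
move=> Hbij Hk uP uQ HP HQ; apply: inversion_rectangle => //.
case: (boolP (all (fun p => p < k%:Z) P)) => [/allP hP|/allPn [p pP hp]]; first by left.
case: (boolP (all (fun q => - k%:Z <= q) Q)) => [/allP hQ|/allPn [q qQ hq]]; first by right.
have [_ h1] := HP p pP; have [_ h2] := HQ q qQ.
have := wide_inversions Hbij h1 _ h2; rewrite leNgt hp ltNge hq => /(_ isT isT).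
lia.
Qed.
End KInversions.

Lemma brill_noether_estimate (g d R r S : int) :
  0 <= r -> r <= R -> 0 <= S -> g - d + R <= S -> (R + 1) * S <= g ->
  0 <= g - (r + 1) * (g - d + r).
Proof.
move=> r0 rR S0 hS hRS.
case: (lerP (g - d + r) 0) => h.
  have : (r + 1) * (g - d + r) <= 0 by rewrite mulr_ge0_le0 //; lia.
  have : 0 <= (R + 1) * S by rewrite mulr_ge0 //; lia.
  lia.
have : (r + 1) * (g - d + r) <= (R + 1) * S by apply: ler_pM; lia.
lia.
Qed.

Theorem mainTheorem8 (V : finType) (m : V -> V -> nat) (u v : V) (k : nat) :
  is_graph m ->
  k_general_transmission m u v k ->
  genus m + 2 <= 2 * (k%:Z) ->
  BN_general m.
Proof.
move=> [msym mdiag conn] [Hlin _ Htr] Hk D r r0 hr.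
have [tau [[Hbij Htau] Hinv]] := Htr D.
have kpos : (0 < k)%N.
  by case: Hinv => s [hs _]; rewrite -ltz_nat; lia.
have Hper := transmission_periodic msym mdiag Htau Hlin.
have [M ub] := periodic_bounded kpos Hper.
set P := [seq b <- irange 0 (absz (deg D)).+1 | tau b <= 0].
set Q := [seq b <- irange (- M%:Z) M | 0 < tau b].
have sizeP : (size P)%:Z = rank m D + 1.
  by rewrite size_filter (count_nonpos_image msym mdiag Htau); have := lez_abs (deg D); lia.
have sizeQ : genus m - deg D + rank m D <= (size Q)%:Z.
  by rewrite size_filter; apply: (count_pos_image_neg msym mdiag Htau conn Hbij ub).
have PQ : ((size P * size Q)%N)%:Z <= genus m.
  apply: (rectangle_bound kpos Hper Hinv Hbij Hk); rewrite ?filter_uniq ?irange_uniq //.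
    by move=> p; rewrite mem_filter mem_irange => /andP [-> /andP [-> _]].
  by move=> q; rewrite mem_filter mem_irange => /andP [-> /andP [_ h]]; split => //; lia.
apply: (brill_noether_estimate r0 hr _ sizeQ); rewrite // -sizeP -PoszM //.
Qed.
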